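(* Fix $n\in\mathbb N$, $z=x+iy\in\mathbb H$ and a simple type cusp $\mathfrak c$ of $\Gamma_n$. Let $z'=x'+iy'\in\mathbb H$ be such that $\Gamma_nz=\Gamma_n\tau_{\mathfrak c}z'$. Then $$\mathcal R_n(x,y)=\bigcup_{d\mid n}\mathcal R^{\rm pr}_{n/d}\left(x'_{\mathfrak c,d},\ d^2y'/\omega_{\mathfrak c}\right)$$ for some $x'_{\mathfrak c,d}\in\mathbb R/\mathbb Z$ depending only on $x'$, $\mathfrak c$ and $d$.
   Context: $\Gamma_1=\mathrm{SL}_2(\mathbb Z)$ and $\Gamma_n=\left\{\begin{pmatrix}a&b\\c&d\end{pmatrix}\in\Gamma_1:n^2\mid c,\ a\equiv d\equiv\pm1\pmod n\right\}$. Cusps of $\Gamma_n$ are $\Gamma_n$-orbits in $\mathbb Q\cup\{\infty\}$; a cusp is of simple type if it has a representative $m/q$ with $\gcd(m,q)=1$ and $\gcd(n^2,q)\mid n$. For a cusp $\mathfrak c$, $\tau_{\mathfrak c}\in\Gamma_1$ satisfies $\tau_{\mathfrak c}\infty=\mathfrak c$, and the width $\omega_{\mathfrak c}$ is the positive integer with $\tau_{\mathfrak c}^{-1}(\tau_{\mathfrak c}N\tau_{\mathfrak c}^{-1}\cap\Gamma_n)\tau_{\mathfrak c}=\langle\begin{pmatrix}1&\omega_{\mathfrak c}\\0&1\end{pmatrix}\rangle$, $N$ the upper-triangular unipotent subgroup (for $\mathfrak c=m/l$ in lowest terms, $\omega_{\mathfrak c}=n^2/\gcd(n,l)^2$). For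 $n\in\mathbb N$, $x\in\mathbb R/\mathbb Z$, $y>0$, in $\mathcal M=\Gamma_1\backslash\mathbb H$: $\mathcal R_n(x,y)=\{\Gamma_1(x+\tfrac jn+iy):0\le j\le n-1\}$, $\mathcal R^{\rm pr}_n(x,y)=\{\Gamma_1(x+\tfrac jn+iy):j\in(\mathbb Z/n\mathbb Z)^\times\}$ (with $(\mathbb Z/1\mathbb Z)^\times=\{0\}$). *)

From HB Require Import structures.
From mathcomp Require Import all_boot all_order all_algebra.
From mathcomp Require Import reals.
Set Implicit Arguments. Unset Strict Implicit. Unset Printing Implicit Defensive.
Import Order.TTheory GRing.Theory Num.Theory.
Local Open Scope ring_scope.

Definition ea (g : 'M[int]_2) : int := g ord0 ord0.
Definition eb (g : 'M[int]_2) : int := g ord0 1.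
Definition ec (g : 'M[int]_2) : int := g 1 ord0.
Definition ed (g : 'M[int]_2) : int := g 1 1.

Definition inSL2 (g : 'M[int]_2) : Prop := \det g = 1.

Definition inGamma (n : nat) (g : 'M[int]_2) : Prop :=
  inSL2 g /\ ((n ^ 2)%N %| ec g)%Z /\
  (((ea g == 1 %[mod n])%Z /\ (ed g == 1 %[mod n])%Z) \/
   ((ea g == -1 %[mod n])%Z /\ (ed g == -1 %[mod n])%Z)).

(* Moebius action of an integer matrix on z = x + i y, represented as (x, y) *)
Definition mob (R : realType) (g : 'M[int]_2) (z : R * R) : R * R :=
  let a := (ea g)%:~R in let b := (eb g)%:~R in
  let c := (ec g)%:~R in let d := (ed g)%:~R in
  let x := z.1 in let y := z.2 in
  let den := (c * x + d) ^+ 2 + (c * y) ^+ 2 in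
  (((a * x + b) * (c * x + d) + a * c * y ^+ 2) / den, y / den).

Definition inH (R : realType) (z : R * R) : Prop := 0 < z.2.

(* Gamma_1-equivalence of points of H: same point of M = Gamma_1 \ H *)
Definition equiv1 (R : realType) (w z : R * R) : Prop :=
  exists g : 'M[int]_2, inSL2 g /\ w = mob g z.

(* w (in H) lies in (the Gamma_1-orbit of a point of) R_n(x, y) *)
Definition inRn (R : realType) (n : nat) (x y : R) (w : R * R) : Prop :=
  exists j : nat, (j < n)%N /\ equiv1 w (x + j%:R / n%:R, y).

(* w lies in R^pr_m(x, y): j ranges over (Z/mZ)^x, with (Z/1Z)^x = {0} *)
Definition inRpr (R : realType) (m : nat) (x y : R) (w : R * R) : Prop :=
  exists j : nat, [/\ (j < m)%N, coprime j m & equiv1 w (x + j%:R / m%:R, y)].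

(* Q u {oo} as option rat (None = oo) with the Moebius action *)
Definition act_cusp (g : 'M[int]_2) (p : option rat) : option rat :=
  let a : rat := (ea g)%:~R in let b : rat := (eb g)%:~R in
  let c : rat := (ec g)%:~R in let d : rat := (ed g)%:~R in
  match p with
  | None => if c == 0 then None else Some (a / c)
  | Some r => if c * r + d == 0 then None else Some ((a * r + b) / (c * r + d))
  end.

(* The cusp Gamma_n (tau oo) is of simple type: it has a representative m/q
   (gcd(m,q)=1) with gcd(n^2, q) | n.  For a rational r in lowest terms q = denq r;
   the representative oo = 1/0 has q = 0. *)
Definition simple_type (n : nat) (tau : 'M[int]_2) : Prop :=
  exists g : 'M[int]_2, inGamma n g /\
    match act_cusp g (act_cusp tau None) with
    | None => (gcdn (n ^ 2) 0 %| n)%N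
    | Some r => (gcdn (n ^ 2) `|denq r| %| n)%N
    end.

Definition transl (k : int) : 'M[int]_2 :=
  \matrix_(i < 2, j < 2) (if i == j then 1 else if (i == ord0) && (j == 1) then k else 0).

(* omega is the width of the cusp tau oo for Gamma_n:
   tau^-1 (tau N tau^-1 cap Gamma_n) tau = < (1 omega; 0 1) > *)
Definition is_width (n : nat) (tau : 'M[int]_2) (omega : nat) : Prop :=
  (0 < omega)%N /\
  forall k : int, inGamma n (tau *m transl k *m invmx tau) <-> (omega%:Z %| k)%Z.

(* Write tau = (a b; c d). The cusp being of simple type means that n = g0 n1 and
   c = g0 c1 with c1 prime to n; the width is then n1^2. For g in Gamma_n the point
   x + j/n + iy of R_n(x, y) is T_j g tau z' with T_j = (n j; 0 n), and T_j g T_j^-1 lies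
   in SL_2(Z), so this point is Gamma_1-equivalent to T_j tau z'. The first column of
   T_j tau is g0 (n1 a + j c1, n c1); put n1 a + j c1 = e f with e = gcd(n1 a + j c1, n)
   and m = n/e. Then f is prime to m c1, and the matrix (p q; -m c1 f) of SL_2(Z) with
   p f + q m c1 = 1 turns T_j tau into the upper triangular (g0 e, B; 0, n1 m), whence
   T_j tau z' ~ (g0 e z' + B)/(n1 m), a point of imaginary part e^2 y'/n1^2. The identity
   c1 B = d e - n1 p determines B modulo n1 m as v d e + n1 k, where v inverts c1 modulo
   n^2 and k inverts -c1 f modulo m; so up to an integer translation the point is
   x'_e + k/m + i e^2 y'/n1^2 with k a unit modulo m. Conversely, for every e | n and
   every unit k modulo m, solving two linear congruences produces a suitable j. *)

From HB Require Import structures.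
From mathcomp Require Import all_boot all_order all_algebra.
From mathcomp Require Import reals.
From mathcomp Require Import ring.
Set Implicit Arguments. Unset Strict Implicit. Unset Printing Implicit Defensive.
Import Order.TTheory GRing.Theory Num.Theory.
Local Open Scope ring_scope.

Definition mx2 (a b c d : int) : 'M[int]_2 :=
  \matrix_(i < 2, j < 2)
    if i == ord0 then (if j == ord0 then a else b) else (if j == ord0 then c else d).

Lemma ea_mx2 a b c d : ea (mx2 a b c d) = a. Proof. by rewrite /ea mxE. Qed.
Lemma eb_mx2 a b c d : eb (mx2 a b c d) = b. Proof. by rewrite /eb mxE. Qed.
Lemma ec_mx2 a b c d : ec (mx2 a b c d) = c. Proof. by rewrite /ec mxE. Qed.
Lemma ed_mx2 a b c d : ed (mx2 a b c d) = d. Proof. by rewrite /ed mxE. Qed.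
Definition mx2E := (ea_mx2, eb_mx2, ec_mx2, ed_mx2).


Lemma mulmx2 a b c d a' b' c' d' :
  mx2 a b c d *m mx2 a' b' c' d' =
  mx2 (a * a' + b * c') (a * b' + b * d') (c * a' + d * c') (c * b' + d * d').
Proof.
apply/matrixP => i j; rewrite !mxE !big_ord_recl big_ord0 !mxE addr0 /=.
by case: i => -[|[|//]] ?; case: j => -[|[|//]] ?.
Qed.

Lemma det_mx2 a b c d : \det (mx2 a b c d) = a * d - b * c.
Proof.
rewrite (expand_det_row _ ord0) !big_ord_recl big_ord0 /cofactor !det_mx11.
by rewrite /row' /col' !mxE /= expr0 expr1 addr0 !mul1r mulN1r mulrN.
Qed.

Lemma transl_mx2 k : transl k = mx2 1 k 0 1.
Proof. by apply/matrixP => i j; rewrite !mxE; case: i => -[|[|//]] ?; case: j => -[|[|//]] ?. Qed.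

Lemma mx2_one : 1%:M = mx2 1 0 0 1.
Proof. by apply/matrixP => i j; rewrite !mxE; case: i => -[|[|//]] ?; case: j => -[|[|//]] ?. Qed.

Lemma mx2_cases (M : 'M[int]_2) : exists a b c d, M = mx2 a b c d.
Proof.
exists (ea M), (eb M), (ec M), (ed M); apply/matrixP => i j; rewrite mxE /ea /eb /ec /ed.
by case: i => -[|[|//]] ?; case: j => -[|[|//]] ? /=; congr (M _ _); apply: val_inj.
Qed.

Lemma invmx_mx2 a b c d : a * d - b * c = 1 -> invmx (mx2 a b c d) = mx2 d (- b) (- c) a.
Proof.
move=> det1; have unit_M : mx2 a b c d \in unitmx by rewrite unitmxE det_mx2 det1 unitr1.
have : mx2 a b c d *m mx2 d (- b) (- c) a = 1%:M.
  by rewrite mulmx2 mx2_one -det1; congr mx2; ring.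
by move/(congr1 (mulmx (invmx (mx2 a b c d)))); rewrite mulmxA mulVmx // mul1mx mulmx1.
Qed.

Section Mobius.
Variable R : realType.
Implicit Types (M : 'M[int]_2) (z : R * R).

Definition mobius_den M z : R :=
  ((ec M)%:~R * z.1 + (ed M)%:~R) ^+ 2 + ((ec M)%:~R * z.2) ^+ 2.

(* [z = (x, y)] stands for [x + iy]. The factor [\det M] in the imaginary part makes
   this an action of all integer matrices of nonzero determinant on the upper half plane,
   e.g. [mx2 n j 0 n] acts as [z |-> z + j/n]. *)
Definition mobius M z : R * R :=
  let a := (ea M)%:~R in let b := (eb M)%:~R in let c := (ec M)%:~R in
  (((a * z.1 + b) * (c * z.1 + (ed M)%:~R) + a * c * z.2 ^+ 2) / mobius_den M z,
   (\det M)%:~R * z.2 / mobius_den M z).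

Lemma mob_mobius g z : inSL2 g -> mob g z = mobius g z.
Proof. by rewrite /inSL2 /mobius => ->; rewrite mul1r. Qed.

Lemma mobius_den_gt0 M z : 0 < z.2 -> \det M != 0 -> 0 < mobius_den M z.
Proof.
have [a [b [c [d ->]]]] := mx2_cases M; rewrite /mobius_den det_mx2 !mx2E => y_gt0.
have [->|c_neq0] := eqVneq c 0.
  rewrite !mulr0 subr0 mul0r add0r mul0r expr0n addr0 mulf_eq0 negb_or => /andP[_ d_neq0].
  by rewrite exprn_even_gt0 // intr_eq0.
by rewrite ltr_wpDl ?sqr_ge0 // exprn_even_gt0 // mulf_neq0 ?intr_eq0 // gt_eqF.
Qed.

Lemma mobius_im_gt0 M z : 0 < z.2 -> 0 < \det M -> 0 < (mobius M z).2.
Proof.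
move=> y_gt0 det_gt0; have den_gt0 := mobius_den_gt0 y_gt0 (lt0r_neq0 det_gt0).
by rewrite /= divr_gt0 // mulr_gt0 // ltr0z.
Qed.

Lemma mobiusM A B z : 0 < z.2 -> \det A != 0 -> \det B != 0 ->
  mobius (A *m B) z = mobius A (mobius B z).
Proof.
move=> y_gt0 detA detB; have detAB : \det (A *m B) != 0 by rewrite det_mulmx mulf_neq0.
have := mobius_den_gt0 y_gt0 detB; have := mobius_den_gt0 y_gt0 detAB.
move: detA detB detAB; case: z y_gt0 => x y /= y_gt0.
have [a [b [c [d ->]]]] := mx2_cases A; have [a' [b' [c' [d' ->]]]] := mx2_cases B.
rewrite /mobius /mobius_den mulmx2 !det_mx2 !mx2E /= => _ _ _.
rewrite !(rmorphD, rmorphN, rmorphM) /=.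
set D := (_ + _) ^+ 2 + _ => DAB_gt0; set E := (_ + _) ^+ 2 + _ => DB_gt0.
have [DAB_neq0 DB_neq0] : D != 0 /\ E != 0 by rewrite !gt_eqF.
have -> : (c%:~R * (((a'%:~R * x + b'%:~R) * (c'%:~R * x + d'%:~R) + a'%:~R * c'%:~R * y ^+ 2) / E)
    + d%:~R) ^+ 2 + (c%:~R * ((a'%:~R * d'%:~R - b'%:~R * c'%:~R) * y / E)) ^+ 2 = D / E :> R.
  by apply: (mulIf DB_neq0); rewrite /D /E; field.
by congr pair; rewrite /D /E; field; rewrite -/D -/E DAB_neq0 DB_neq0.
Qed.

Lemma mobius_upper (A B D : int) x y : D != 0 ->
  mobius (mx2 A B 0 D) (x, y) = ((A%:~R * x + B%:~R) / D%:~R, A%:~R * y / D%:~R).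
Proof.
move=> D_neq0; have DR_neq0 : D%:~R != 0 :> R by rewrite intr_eq0.
rewrite /mobius /mobius_den det_mx2 !mx2E /= !mul0r !mulr0 add0r subr0 expr0n addr0 /=.
by congr pair; field.
Qed.

Lemma mobius1 z : mobius 1%:M z = z.
Proof. by case: z => x y; rewrite mx2_one mobius_upper ?oner_eq0 // !mul1r addr0 !divr1. Qed.

Lemma equiv1_mobius g M z : inSL2 g -> \det M != 0 -> 0 < z.2 ->
  equiv1 (mobius (g *m M) z) (mobius M z).
Proof.
move=> g_SL2 detM y_gt0; exists g; split => //.
by rewrite mob_mobius // mobiusM // g_SL2 oner_eq0.
Qed.

Lemma equiv1_sym w z : 0 < z.2 -> equiv1 w z -> equiv1 z w.
Proof.
move=> y_gt0 [g [g_SL2 ->]]; have g_unit : g \in unitmx by rewrite unitmxE g_SL2 unitr1.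
have ginv_SL2 : inSL2 (invmx g) by rewrite /inSL2 det_inv g_SL2 invr1.
exists (invmx g); split => //.
by rewrite !mob_mobius // -mobiusM ?mulVmx ?mobius1 // ?ginv_SL2 ?g_SL2 ?oner_eq0.
Qed.

Lemma equiv1_trans w u z : 0 < z.2 -> equiv1 w u -> equiv1 u z -> equiv1 w z.
Proof.
move=> y_gt0 [g [g_SL2 ->]] [h [h_SL2 ->]].
have gh_SL2 : inSL2 (g *m h) by rewrite /inSL2 det_mulmx g_SL2 h_SL2 mulr1.
exists (g *m h); split => //.
by rewrite !mob_mobius // mobiusM // ?g_SL2 ?h_SL2 ?oner_eq0.
Qed.

Lemma equiv1_upper_mod A B B' D z : (D %| B - B')%Z -> A * D != 0 -> 0 < z.2 ->
  equiv1 (mobius (mx2 A B 0 D) z) (mobius (mx2 A B' 0 D) z).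
Proof.
case/dvdzP => t B_eq AD_neq0 y_gt0.
have -> : mx2 A B 0 D = transl t *m mx2 A B' 0 D.
  by rewrite transl_mx2 mulmx2 -[B](subrK B') B_eq; congr mx2; ring.
apply: equiv1_mobius => //; first by rewrite /inSL2 transl_mx2 det_mx2; ring.
by rewrite det_mx2 mulr0 subr0.
Qed.
End Mobius.

Lemma PoszX (m k : nat) : ((m ^ k)%N : int) = (m : int) ^+ k.
Proof. by elim: k => // k IHk; rewrite expnS exprS PoszM IHk. Qed.

Lemma inGamma_mx2 n a b c d : inGamma n (mx2 a b c d) ->
  exists c0 r, [/\ a * d - b * c = 1, c = (n : int) ^+ 2 * c0 & d = a + (n : int) * r].
Proof.
case; rewrite /inSL2 det_mx2 !mx2E PoszX => det1 [/dvdzP[c0 c_eq] d_pm_a].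
have /dvdzP[r d_sub_a] : ((n : int) %| d - a)%Z.
  by rewrite -eqz_mod_dvd; case: d_pm_a => -[/eqP-> /eqP->].
exists c0, r; split => //; first by rewrite c_eq mulrC.
by rewrite -[LHS](subrK a) d_sub_a addrC mulrC.
Qed.

Lemma Gamma_scaled_transl_conj n (j : int) g : inGamma n g ->
  exists2 g', inSL2 g' & mx2 n j 0 n *m g = g' *m mx2 n j 0 n.
Proof.
have [a [b [c [d ->]]]] := mx2_cases g.
case/inGamma_mx2 => c0 [r [det1 c_eq d_eq]]; subst c d.
exists (mx2 (a + j * n%:Z * c0) (b + j * r - j ^+ 2 * c0) (n%:Z ^+ 2 * c0)
             (a + n%:Z * r - j * n%:Z * c0)).
  by rewrite /inSL2 det_mx2 -det1; ring.
by rewrite !mulmx2; congr mx2; ring.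
Qed.

Lemma act_cusp_infty_mul g (a b c d : int) : a * d - b * c = 1 ->
  act_cusp g (act_cusp (mx2 a b c d) None) = act_cusp (g *m mx2 a b c d) None.
Proof.
move=> det1; have [a' [b' [c' [d' ->]]]] := mx2_cases g.
rewrite /act_cusp mulmx2 !mx2E !(rmorphD, rmorphM) /=.
have [c_eq0|c_neq0] := eqVneq c 0.
  have a_neq0 : a%:~R != 0 :> rat.
    by rewrite intr_eq0; apply: contra_eq_neq det1 => ->; rewrite c_eq0 !(mul0r, mulr0) subr0.
  rewrite c_eq0 eqxx !mulr0 !addr0 mulf_eq0 (negPf a_neq0) orbF.
  by case: ifP => // /negbT c'_neq0; congr Some; field; rewrite a_neq0 c'_neq0.
have cR_neq0 : c%:~R != 0 :> rat by rewrite intr_eq0.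
rewrite (negPf cR_neq0).
have -> : c'%:~R * (a%:~R / c%:~R) + d'%:~R = (c'%:~R * a%:~R + d'%:~R * c%:~R) / c%:~R :> rat.
  by field.
rewrite mulf_eq0 invr_eq0 (negPf cR_neq0) orbF.
by case: ifP => // /negbT D_neq0; congr Some; field; rewrite D_neq0 cR_neq0.
Qed.

Lemma gcdn_ec_Gamma_mul n g M : inGamma n g ->
  gcdn (n ^ 2) `|ec (g *m M)| = gcdn (n ^ 2) `|ec M|.
Proof.
have [a [b [c [d ->]]]] := mx2_cases g; have [a' [b' [c' [d' ->]]]] := mx2_cases M.
case/inGamma_mx2 => c0 [r [det1 c_eq _]].
have co_n2_d : coprimez (n%:Z ^+ 2) d.
  by apply/coprimezP; exists (- (b * c0), a); rewrite /= -det1 c_eq; ring.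
have : gcdz (n%:Z ^+ 2) (c * a' + d * c') = gcdz (n%:Z ^+ 2) c'.
  by rewrite c_eq -mulrA mulrC gcdzMDl Gauss_gcdzr.
by rewrite mulmx2 !mx2E /gcdz abszX /= => -[].
Qed.

Lemma simple_type_gcd n tau : inSL2 tau -> simple_type n tau ->
  (gcdn (n ^ 2) `|ec tau| %| n)%N.
Proof.
have [a [b [c [d ->]]]] := mx2_cases tau; rewrite /inSL2 det_mx2 => det1 [g [g_Gamma]].
rewrite act_cusp_infty_mul // -(gcdn_ec_Gamma_mul _ g_Gamma).
have : inSL2 (g *m mx2 a b c d) by rewrite /inSL2 det_mulmx det_mx2 det1 g_Gamma.1 mulr1.
move: (g *m _) => M; have [a' [b' [c' [d' ->]]]] := mx2_cases M.
rewrite /inSL2 /act_cusp det_mx2 !mx2E intr_eq0.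
have [-> //|c'_neq0 detM1] := eqVneq c' 0.
rewrite coprimeq_den ?(negPf c'_neq0) //.
by rewrite -coprimezE; apply/coprimezP; exists (d', - b'); rewrite /= -detM1; ring.
Qed.

Lemma simple_cusp_factor n tau : (0 < n)%N -> inSL2 tau -> simple_type n tau ->
  exists g0 n1 c1 : int, [/\ 0 < n1, n%:Z = g0 * n1, ec tau = g0 * c1 & coprimez n c1].
Proof.
move=> n_gt0 tau_SL2 /(simple_type_gcd tau_SL2) G_dvd_n.
pose G := gcdz (n%:Z ^+ 2) (ec tau).
have /dvdzP[n1 n_eq] : (G %| n%:Z)%Z by rewrite dvdzE /G /gcdz abszX.
have /dvdzP[c1 c_eq] := dvdz_gcdr (n%:Z ^+ 2) (ec tau); rewrite -/G in c_eq.
have [u [v Bezout_G]] := Bezoutz (n%:Z ^+ 2) (ec tau); rewrite -/G in Bezout_G.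
have G_gt0 : 0 < G.
  by rewrite lt_def gcdz_eq0 expf_eq0 eqz_nat (negPf (lt0n_neq0 n_gt0)) andbF.
exists G, n1, c1; split; rewrite 1?mulrC //.
- by move: n_gt0; rewrite -ltz_nat n_eq pmulr_lgt0.
apply/coprimezP; exists (u * n1, v); apply: (mulIf (lt0r_neq0 G_gt0)).
by rewrite /= mul1r -[RHS]Bezout_G c_eq n_eq; ring.
Qed.

Lemma modz_solvable (m : nat) (x r : int) : (0 < m)%N -> coprimez x m ->
  exists2 k : nat, (k < m)%N & (m%:Z %| x * k%:Z - r)%Z.
Proof.
move=> m_gt0 /coprimezP[[u w] /= Bezout]; have m_neq0 : m%:Z != 0 by rewrite eqz_nat -lt0n.
pose q := ((u * r) %/ m)%Z.
have mod_eq : ((u * r) %% m)%Z = u * r - q * m by rewrite [in RHS](divz_eq (u * r) m); ring.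
exists (absz ((u * r) %% m)%Z).
  by rewrite -ltz_nat gez0_abs ?modz_ge0 ?ltz_pmod.
rewrite gez0_abs ?modz_ge0 // mod_eq; apply/dvdzP; exists (- (w * r) - x * q).
have ux : x * u = 1 - w * m by rewrite -Bezout; ring.
by rewrite mulrBr mulrA ux; ring.
Qed.

Lemma coprimez_of_dvdzD1 (m z : int) : (m %| z + 1)%Z -> coprimez z m.
Proof. by case/dvdzP => t zt; apply/coprimezP; exists (-1, t); rewrite /= -zt; ring. Qed.

Section SimpleCusp.
Variables (R : realType) (n : nat) (a b c d g0 n1 c1 v : int).
Hypotheses (n_gt0 : (0 < n)%N) (det_tau : a * d - b * c = 1).
Hypotheses (n_eq : n%:Z = g0 * n1) (c_eq : c = g0 * c1) (n1_gt0 : 0 < n1).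
Hypothesis coprime_n_c1 : coprimez n c1.
Hypothesis v_inv : (n%:Z ^+ 2 %| v * c1 - 1)%Z.

Let tau := mx2 a b c d.

Let tau_SL2 : inSL2 tau. Proof. by rewrite /inSL2 det_mx2. Qed.

Let g0_neq0 : g0 != 0.
Proof. by apply: contra_eq_neq n_eq => ->; rewrite mul0r eqz_nat -lt0n. Qed.

Let n1_dvd_n : (n1 %| n%:Z)%Z.
Proof. by rewrite n_eq dvdz_mull. Qed.

Let coprime_n1_c1 : coprimez n1 c1.
Proof. exact: coprimez_dvdl n1_dvd_n coprime_n_c1. Qed.

Let conj_transl_mx2 k : tau *m transl k *m invmx tau =
  mx2 (1 - a * c * k) (a ^+ 2 * k) (- (c ^+ 2 * k)) (1 + a * c * k).
Proof.
by rewrite transl_mx2 invmx_mx2 // !mulmx2; congr mx2; rewrite -?[in RHS]det_tau; ring.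
Qed.

Lemma inGamma_conj_transl k : inGamma n (tau *m transl k *m invmx tau) <-> (n1 ^+ 2 %| k)%Z.
Proof.
rewrite conj_transl_mx2; split.
  case=> _ [+ _]; rewrite ec_mx2 PoszX n_eq c_eq rpredN !exprMn -mulrA.
  rewrite dvdz_mul2l ?expf_neq0 // Gauss_dvdzr //.
  by rewrite coprimez_pexpl // coprimez_pexpr.
case/dvdzP => t ->; split; first by rewrite /inSL2 det_mx2; ring.
split.
  by rewrite ec_mx2 PoszX; apply/dvdzP; exists (- (c1 ^+ 2 * t)); rewrite c_eq n_eq; ring.
left; rewrite !eqz_mod_dvd ea_mx2 ed_mx2; split; apply/dvdzP.
  by exists (- (a * c1 * n1 * t)); rewrite c_eq n_eq; ring.
by exists (a * c1 * n1 * t); rewrite c_eq n_eq; ring.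
Qed.

Lemma width_eq omega : is_width n tau omega -> omega%:Z = n1 ^+ 2.
Proof.
case=> _ width_omega.
have dvd_omega k : (omega%:Z %| k)%Z = (n1 ^+ 2 %| k)%Z.
  apply/idP/idP => [/(width_omega k)/inGamma_conj_transl|/inGamma_conj_transl/(width_omega k)] //.
rewrite -[n1 ^+ 2]gez0_abs ?sqr_ge0 //; congr Posz; apply/eqP.
have := dvd_omega (n1 ^+ 2); have := dvd_omega omega; rewrite !dvdzz => h2 h1.
by rewrite eqn_dvd; apply/andP; split; [exact: h1 | exact: esym h2].
Qed.

Lemma Rn_point_equiv_transl_tau (x y x' y' : R) g (j : nat) : 0 < y' -> inGamma n g ->
  (x, y) = mob g (mob tau (x', y')) ->
  equiv1 (x + j%:R / n%:R, y) (mobius (mx2 n j 0 n *m tau) (x', y')).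
Proof.
move=> y'_gt0 g_Gamma xy_eq; have [g' g'_SL2 conj_g] := Gamma_scaled_transl_conj j g_Gamma.
have n_neq0 : n%:Z != 0 by rewrite eqz_nat -lt0n.
have detT : \det (mx2 n j 0 n) != 0 by rewrite det_mx2 mulr0 subr0 mulf_neq0.
have detg : \det g != 0 by case: g_Gamma => ->; rewrite oner_eq0.
have dettau : \det tau != 0 by rewrite tau_SL2 oner_eq0.
have -> : (x + j%:R / n%:R, y) = mobius (mx2 n j 0 n) (x, y).
  rewrite mobius_upper //; have nR_neq0 : n%:R != 0 :> R by rewrite pnatr_eq0 -lt0n.
  by rewrite !pmulrn; congr pair; field.
rewrite xy_eq !mob_mobius //; last by case: g_Gamma.
rewrite -(mobiusM (z := (x', y')) y'_gt0 detg dettau) -mobiusM ?det_mulmx ?mulf_neq0 //.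
rewrite mulmxA conj_g -mulmxA.
by apply: equiv1_mobius; rewrite ?det_mulmx ?mulf_neq0.
Qed.

Let coprime_a_c1 : coprimez a c1.
Proof. by apply/coprimezP; exists (d, - (b * g0)); rewrite /= -det_tau c_eq; ring. Qed.

Let coprime_cusp_form_c1 (j : int) : coprimez (n1 * a + j * c1) c1.
Proof.
rewrite coprimez_sym /coprimez addrC gcdzMDl -/(coprimez c1 _) coprimez_sym coprimezMl.
by rewrite coprime_n1_c1 coprime_a_c1.
Qed.

Lemma transl_tau_upper_triangular (j e : nat) (f p q : int) : (e %| n)%N ->
  n1 * a + j%:Z * c1 = e%:Z * f -> p * f + q * ((n %/ e)%N%:Z * c1) = 1 ->
  mx2 p q (- ((n %/ e)%N%:Z * c1)) f *m (mx2 n j 0 n *m tau) =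
  mx2 (g0 * e) (p * (n%:Z * b + j%:Z * d) + q * (n%:Z * d)) 0 (n1 * (n %/ e)%N).
Proof.
move=> /divnK n_me l_eq pq_eq; set m := (n %/ e)%N in n_me pq_eq *.
have n_em : n%:Z = e%:Z * m%:Z by rewrite -n_me PoszM mulrC.
have jc1 : j%:Z * c1 = e%:Z * f - n1 * a by rewrite -l_eq; ring.
have nc1 : n%:Z * c1 = n1 * c by rewrite c_eq n_eq; ring.
have col1 : n%:Z * a + j%:Z * c = g0 * (e%:Z * f) by rewrite -l_eq c_eq n_eq; ring.
have nc : n%:Z * c = g0 * e%:Z * (m%:Z * c1) by rewrite c_eq n_em; ring.
rewrite /tau !mulmx2 !(mul0r, add0r) col1 nc; congr mx2.
- transitivity (g0 * e%:Z * (p * f + q * (m%:Z * c1))); first ring.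
  by rewrite pq_eq mulr1.
- ring.
transitivity (- m%:Z * b * (n%:Z * c1) - m%:Z * d * (j%:Z * c1) + d * f * n%:Z); first ring.
rewrite nc1 jc1 n_em; transitivity (m%:Z * n1 * (a * d - b * c)); first ring.
by rewrite det_tau mulr1 mulrC.
Qed.

Lemma transl_tau_upper_entry_mod (j e k : nat) (f p q : int) : (e %| n)%N ->
  n1 * a + j%:Z * c1 = e%:Z * f -> p * f + q * ((n %/ e)%N%:Z * c1) = 1 ->
  ((n %/ e)%N%:Z %| c1 * k%:Z * f + 1)%Z ->
  (n1 * (n %/ e)%N %| p * (n%:Z * b + j%:Z * d) + q * (n%:Z * d)
                      - (v * d * e%:Z + n1 * k%:Z))%Z.
Proof.
move=> /divnK n_me l_eq pq_eq m_dvd; set m := (n %/ e)%N in n_me pq_eq m_dvd *.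
have n_em : n%:Z = e%:Z * m%:Z by rewrite -n_me PoszM mulrC.
have m_dvd_n : (m%:Z %| n%:Z)%Z by rewrite n_em dvdz_mull.
set B := p * _ + _.
have c1B : c1 * B = d * e%:Z - n1 * p.
  have jc1 : j%:Z * c1 = e%:Z * f - n1 * a by rewrite -l_eq; ring.
  have nc1 : n%:Z * c1 = n1 * c by rewrite c_eq n_eq; ring.
  transitivity (p * b * (n1 * c) + p * d * (e%:Z * f - n1 * a) + q * d * (e%:Z * m%:Z * c1)).
    by rewrite -nc1 -jc1 -n_em /B; ring.
  transitivity (d * e%:Z * (p * f + q * (m%:Z * c1)) - n1 * p * (a * d - b * c)); first ring.
  by rewrite pq_eq det_tau !mulr1.
have m_dvd_p_c1k : (m%:Z %| p + c1 * k%:Z)%Z.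
  have /coprimez_of_dvdzD1 : (m%:Z %| c1 * k%:Z * f + 1)%Z := m_dvd.
  rewrite coprimezMl => /andP[_]; rewrite coprimez_sym => coprime_m_f.
  rewrite -(Gauss_dvdzl _ coprime_m_f).
  have -> : (p + c1 * k%:Z) * f = c1 * k%:Z * f + 1 - q * c1 * m%:Z.
    by rewrite -pq_eq; ring.
  by rewrite rpredB // dvdz_mull.
have coprime_n1m_c1 : coprimez (n1 * m%:Z) c1.
  by rewrite coprimezMl coprime_n1_c1 (coprimez_dvdl m_dvd_n).
rewrite -(Gauss_dvdzl _ coprime_n1m_c1).
have -> : (B - (v * d * e%:Z + n1 * k%:Z)) * c1
          = - (d * e%:Z) * (v * c1 - 1) - n1 * (p + c1 * k%:Z).
  by rewrite mulrBl [B * c1]mulrC c1B; ring.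
rewrite rpredB // ?dvdz_mul2l ?gt_eqF // dvdz_mull //.
apply: dvdz_trans v_inv; rewrite expr2; exact: dvdz_mul n1_dvd_n m_dvd_n.
Qed.

Definition cusp_shift (x' : R) (e : nat) : R :=
  ((g0 * e%:Z)%:~R * x' + (v * d * e%:Z)%:~R) / (n1 * (n %/ e)%N%:Z)%:~R.

Lemma mobius_upper_cusp_shift (e k : nat) (x' y' : R) : (e %| n)%N ->
  mobius (mx2 (g0 * e%:Z) (v * d * e%:Z + n1 * k%:Z) 0 (n1 * (n %/ e)%N%:Z)) (x', y') =
  (cusp_shift x' e + k%:R / (n %/ e)%:R, e%:R ^+ 2 * y' / (n1 ^+ 2)%:~R).
Proof.
move=> /divnK n_me; set m := (n %/ e)%N in n_me *.
have m_gt0 : (0 < m)%N by move: n_gt0; rewrite -n_me muln_gt0 => /andP[].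
have n1R_neq0 : n1%:~R != 0 :> R by rewrite intr_eq0 gt_eqF.
have mR_neq0 : m%:~R != 0 :> R by rewrite intr_eq0 eqz_nat -lt0n.
have g0R : g0%:~R = e%:~R * m%:~R / n1%:~R :> R.
  by apply: (mulIf n1R_neq0); rewrite divfK // -!rmorphM /= -n_eq -n_me PoszM mulrC.
rewrite mobius_upper ?mulf_neq0 ?gt_eqF ?ltz_nat // /cusp_shift !pmulrn.
by rewrite !(rmorphM, rmorphD) /= g0R; congr pair; field; rewrite n1R_neq0 mR_neq0.
Qed.

Lemma transl_tau_equiv_Rpr_point (j e k : nat) (f : int) (x' y' : R) : 0 < y' -> (e %| n)%N ->
  n1 * a + j%:Z * c1 = e%:Z * f -> ((n %/ e)%N%:Z %| c1 * k%:Z * f + 1)%Z ->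
  equiv1 (mobius (mx2 n j 0 n *m tau) (x', y'))
         (cusp_shift x' e + k%:R / (n %/ e)%:R, e%:R ^+ 2 * y' / (n1 ^+ 2)%:~R).
Proof.
move=> y'_gt0 e_dvd_n l_eq m_dvd; rewrite -mobius_upper_cusp_shift //.
have n_sq_gt0 : 0 < n%:Z ^+ 2 by rewrite exprn_gt0 // ltz_nat.
have detT : \det (mx2 n j 0 n *m tau) = n%:Z ^+ 2 by rewrite det_mulmx tau_SL2 det_mx2; ring.
have n_em : n%:Z = e%:Z * (n %/ e)%N%:Z by rewrite -PoszM mulnC divnK.
have detU B : \det (mx2 (g0 * e%:Z) B 0 (n1 * (n %/ e)%N%:Z)) = n%:Z ^+ 2.
  rewrite det_mx2 mulr0 subr0; transitivity ((g0 * n1) * (e%:Z * (n %/ e)%N%:Z)); first ring.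
  by rewrite -n_eq -n_em expr2.
have /coprimezP[[p q] /= pq_eq] : coprimez f ((n %/ e)%N%:Z * c1).
  have /coprimez_of_dvdzD1 := m_dvd; have := coprime_cusp_form_c1 j.
  by rewrite l_eq !coprimezMl coprimezMr => /andP[_ ->] /andP[_ ->].
have gamma_SL2 : inSL2 (mx2 p q (- ((n %/ e)%N%:Z * c1)) f).
  by rewrite /inSL2 det_mx2 -pq_eq; ring.
apply: equiv1_trans (equiv1_sym _ (equiv1_mobius gamma_SL2 _ _)) _ => //.
- by apply: mobius_im_gt0; rewrite ?detU.
- by apply: mobius_im_gt0; rewrite ?detT.
- by rewrite detT gt_eqF.
rewrite transl_tau_upper_triangular //; apply: equiv1_upper_mod => //.
  exact: transl_tau_upper_entry_mod e_dvd_n l_eq pq_eq m_dvd.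
by have := detU 0; rewrite det_mx2 mulr0 subr0 => ->; rewrite gt_eqF.
Qed.

Let cusp_point_im_gt0 (e : nat) (y' : R) : 0 < y' -> (e %| n)%N ->
  0 < e%:R ^+ 2 * y' / (n1 ^+ 2)%:~R.
Proof.
move=> y'_gt0 /(dvdn_gt0 n_gt0) e_gt0.
by rewrite divr_gt0 ?mulr_gt0 ?exprn_gt0 ?ltr0n // ltr0z exprn_gt0.
Qed.

Lemma Rn_point_equiv_Rpr_point (x y x' y' : R) g (j e k : nat) (f : int) :
  0 < y' -> inGamma n g -> (x, y) = mob g (mob tau (x', y')) -> (e %| n)%N ->
  n1 * a + j%:Z * c1 = e%:Z * f -> ((n %/ e)%N%:Z %| c1 * k%:Z * f + 1)%Z ->
  equiv1 (x + j%:R / n%:R, y)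
         (cusp_shift x' e + k%:R / (n %/ e)%:R, e%:R ^+ 2 * y' / (n1 ^+ 2)%:~R).
Proof.
move=> y'_gt0 g_Gamma xy_eq e_dvd_n l_eq m_dvd.
apply: equiv1_trans (Rn_point_equiv_transl_tau j y'_gt0 g_Gamma xy_eq) _.
  exact: cusp_point_im_gt0 y'_gt0 e_dvd_n.
exact: transl_tau_equiv_Rpr_point y'_gt0 e_dvd_n l_eq m_dvd.
Qed.

Let coprime_c1_div (e : nat) : (e %| n)%N -> coprimez c1 (n %/ e)%N.
Proof. by move=> e_dvd_n; rewrite coprimez_sym (coprimez_dvdl _ coprime_n_c1) // dvdn_div. Qed.

Lemma Rpr_index_of_Rn_index (j : nat) : exists e k f, [/\ (e %| n)%N, (k < n %/ e)%N,
  coprime k (n %/ e), n1 * a + j%:Z * c1 = e%:Z * f & ((n %/ e)%N%:Z %| c1 * k%:Z * f + 1)%Z].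
Proof.
pose l := n1 * a + j%:Z * c1; have [u [w Bezout]] := Bezoutz l n.
have e_dvd_n : (gcdn `|l| n %| n)%N := dvdn_gcdr _ _.
have e_dvd_l : (gcdz l n %| l)%Z := dvdz_gcdl _ _.
rewrite [gcdz l n]/gcdz absz_nat in Bezout e_dvd_l.
move: (gcdn `|l| n) e_dvd_n e_dvd_l Bezout => e e_dvd_n /dvdzP[f l_eq] Bezout.
set m := (n %/ e)%N.
have n_em : n%:Z = e%:Z * m%:Z by rewrite -PoszM mulnC divnK.
have e_gt0 : (0 < e)%N := dvdn_gt0 n_gt0 e_dvd_n.
have m_gt0 : (0 < m)%N by rewrite divn_gt0 // dvdn_leq.
have coprime_f_m : coprimez f m.
  apply/coprimezP; exists (u, w); apply: (mulIf (_ : e%:Z != 0)); first by rewrite eqz_nat -lt0n.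
  by rewrite /= mul1r -[RHS]Bezout l_eq n_em; ring.
have [k k_lt m_dvd] : exists2 k : nat, (k < m)%N & (m%:Z %| - (c1 * f) * k%:Z - 1)%Z.
  by apply: modz_solvable; rewrite // coprimeNz coprimezMl coprime_c1_div.
have m_dvd' : (m%:Z %| c1 * k%:Z * f + 1)%Z.
  have -> : c1 * k%:Z * f + 1 = - (- (c1 * f) * k%:Z - 1) by ring.
  by rewrite rpredN.
exists e, k, f; split => //; last by rewrite [_ * f]mulrC.
by have /coprimez_of_dvdzD1 := m_dvd'; rewrite !coprimezMl => /andP[/andP[_]].
Qed.

Lemma Rn_index_of_Rpr_index (e k : nat) : (e %| n)%N -> coprime k (n %/ e) ->
  exists j f, [/\ (j < n)%N, n1 * a + j%:Z * c1 = e%:Z * f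
                & ((n %/ e)%N%:Z %| c1 * k%:Z * f + 1)%Z].
Proof.
move=> e_dvd_n coprime_k_m; set m := (n %/ e)%N in coprime_k_m *.
have n_em : n%:Z = e%:Z * m%:Z by rewrite -PoszM mulnC divnK.
have e_gt0 : (0 < e)%N := dvdn_gt0 n_gt0 e_dvd_n.
have m_gt0 : (0 < m)%N by rewrite divn_gt0 // dvdn_leq.
have [f0 _ m_dvd] : exists2 f0 : nat, (f0 < m)%N & (m%:Z %| - (c1 * k%:Z) * f0%:Z - 1)%Z.
  by apply: modz_solvable; rewrite // coprimeNz coprimezMl coprime_c1_div.
have [j j_lt /dvdzP[s s_eq]] : exists2 j : nat, (j < n)%N &
    (n%:Z %| c1 * j%:Z - (e%:Z * f0%:Z - n1 * a))%Z.
  by apply: modz_solvable; rewrite // coprimez_sym.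
exists j, (f0%:Z + s * m%:Z); split => //.
  transitivity (c1 * j%:Z - (e%:Z * f0%:Z - n1 * a) + e%:Z * f0%:Z); first ring.
  by rewrite s_eq n_em; ring.
have -> : c1 * k%:Z * (f0%:Z + s * m%:Z) + 1 =
          - (- (c1 * k%:Z) * f0%:Z - 1) + c1 * k%:Z * s * m%:Z by ring.
by rewrite rpredD ?rpredN // dvdz_mull.
Qed.

Lemma inRn_cusp_decomposition (x y x' y' : R) g w :
  0 < y -> 0 < y' -> inGamma n g -> (x, y) = mob g (mob tau (x', y')) ->
  inRn n x y w <-> exists e : nat, (e %| n)%N /\
    inRpr (n %/ e) (cusp_shift x' e) (e%:R ^+ 2 * y' / (n1 ^+ 2)%:~R) w.
Proof.
move=> y_gt0 y'_gt0 g_Gamma xy_eq; split.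
  case=> j [_ w_equiv].
  have [e [k [f [e_dvd_n k_lt coprime_k l_eq m_dvd]]]] := Rpr_index_of_Rn_index j.
  exists e; split => //; exists k; split => //.
  apply: equiv1_trans w_equiv _; first exact: cusp_point_im_gt0 y'_gt0 e_dvd_n.
  exact: Rn_point_equiv_Rpr_point y'_gt0 g_Gamma xy_eq e_dvd_n l_eq m_dvd.
case=> e [e_dvd_n [k [_ coprime_k w_equiv]]].
have [j [f [j_lt l_eq m_dvd]]] := Rn_index_of_Rpr_index e_dvd_n coprime_k.
exists j; split => //; apply: equiv1_trans w_equiv _ => //.
apply: equiv1_sym; first exact: cusp_point_im_gt0 y'_gt0 e_dvd_n.
exact: Rn_point_equiv_Rpr_point y'_gt0 g_Gamma xy_eq e_dvd_n l_eq m_dvd.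
Qed.
End SimpleCusp.

Theorem proposition7p7 (R : realType) (n : nat) (tau : 'M[int]_2) (omega : nat) :
  (0 < n)%N -> inSL2 tau -> simple_type n tau -> is_width n tau omega ->
  exists xc : R -> nat -> R,
    forall x y x' y' : R, 0 < y -> 0 < y' ->
      (exists g : 'M[int]_2, inGamma n g /\ (x, y) = mob g (mob tau (x', y'))) ->
      forall w : R * R, inH w ->
        (inRn n x y w <->
         exists d : nat, (d %| n)%N /\
           inRpr (n %/ d) (xc x' d) (d%:R ^+ 2 * y' / omega%:R) w).
Proof.
have [a [b [c [d ->]]]] := mx2_cases tau; move=> n_gt0 tau_SL2 tau_simple tau_width.
have det_tau : a * d - b * c = 1 by rewrite -det_mx2.
have [g0 [n1 [c1 [n1_gt0 n_eq]]]] := simple_cusp_factor n_gt0 tau_SL2 tau_simple.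
rewrite ec_mx2 => c_eq coprime_n_c1.
have omega_eq := width_eq n_gt0 det_tau n_eq c_eq coprime_n_c1 tau_width.
have [v _ v_inv] : exists2 v : nat, (v < n ^ 2)%N & ((n ^ 2)%N%:Z %| c1 * v%:Z - 1)%Z.
  by apply: modz_solvable; rewrite ?expn_gt0 ?n_gt0 // PoszX coprimez_pexpr // coprimez_sym.
rewrite PoszX mulrC in v_inv.
exists (cusp_shift n d g0 n1 v) => x y x' y' y_gt0 y'_gt0 [g [g_Gamma xy_eq]] w _.
have -> : omega%:R = (n1 ^+ 2)%:~R :> R by rewrite -omega_eq.
exact: (inRn_cusp_decomposition n_gt0 det_tau n_eq c_eq n1_gt0 coprime_n_c1 v_inv _
  y_gt0 y'_gt0 g_Gamma xy_eq).
Qed.
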